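(* Let $T_l$ be a $2m$ deck-shuffler IET. Then there is a $(2m-1)$-flower $F_l$ for $E_2$ such that $H_l([0,1))\subset F_l$.
   Context: $\mathbb{T}=\mathbb{R}/\mathbb{Z}\cong[0,1)$, $E_2(x)=2x\bmod1$. A $2m$ deck-shuffler IET $T_l$ is the map $[0,1)\to[0,1)$ determined by a length vector $l$ giving a partition of $[0,1)$ into consecutive left-closed right-open intervals $A_1<\dots<A_m<B_1<\dots<B_m$ of positive lengths, with $T_l(x)=x+|B_1|+\dots+|B_i|$ for $x\in A_i$ and $T_l(x)=x-|A_i|-\dots-|A_m|$ for $x\in B_i$. $B=B_1\cup\dots\cup B_m$ and $H_l(x)=\sum_{n=0}^\infty \chi_B(T_l^n x)/2^{n+1}$. A preimage selector for $E_2$ is a map $\eta:\mathbb{T}\to\mathbb{T}$ with $E_2(\eta(x))=x$ for all $x$, having finitely many discontinuities, each a jump discontinuity (both one-sided limits exist, differ, and one equals the value). A $p$-flower is $\overline{\eta(\mathbb{T})}$ for a preimage selector with exactly $p$ discontinuities. *)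

From Stdlib Require Import Reals List.
From Coquelicot Require Import Coquelicot.
Open Scope R_scope.

(* The circle T = R/Z is represented by reals; a point of T is a real mod 1.
   Circle distance between (the classes of) x and y. *)
Definition cdist (x y : R) : R :=
  Rmin (frac_part (x - y)) (1 - frac_part (x - y)).

Definition E2 (x : R) : R := frac_part (2 * x).

Fixpoint psum (f : nat -> R) (n : nat) : R :=
  match n with O => 0 | S k => psum f k + f k end.

Definition ind (p q x : R) : R :=
  if Rle_dec p x then (if Rlt_dec x q then 1 else 0) else 0.

(* Length vector of a 2m deck shuffler: a i = |A_(i+1)|, b i = |B_(i+1)|,
   for i = 0..m-1, all positive, total length 1. *)
Definition length_vector (m : nat) (a b : nat -> R) : Prop :=
  (1 <= m)%nat /\
  (forall i, (i < m)%nat -> 0 < a i) /\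
  (forall i, (i < m)%nat -> 0 < b i) /\
  psum a m + psum b m = 1.

(* A_(i+1) = [psum a i, psum a (i+1)),
   B_(i+1) = [|A| + psum b i, |A| + psum b (i+1)) with |A| = psum a m. *)
Definition Aint_lo (a : nat -> R) (i : nat) := psum a i.
Definition Aint_hi (a : nat -> R) (i : nat) := psum a (S i).
Definition Bint_lo (m : nat) (a b : nat -> R) (i : nat) := psum a m + psum b i.
Definition Bint_hi (m : nat) (a b : nat -> R) (i : nat) := psum a m + psum b (S i).

(* T_l(x) = x + |B_1|+...+|B_i| on A_i, x - |A_i| - ... - |A_m| on B_i. *)
Definition Tl (m : nat) (a b : nat -> R) (x : R) : R :=
  x + psum (fun i => ind (Aint_lo a i) (Aint_hi a i) x * psum b (S i)) m
    - psum (fun i => ind (Bint_lo m a b i) (Bint_hi m a b i) x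
                       * (psum a m - psum a i)) m.

Definition chiB (m : nat) (a b : nat -> R) (x : R) : R :=
  psum (fun i => ind (Bint_lo m a b i) (Bint_hi m a b i) x) m.

Definition Hl (m : nat) (a b : nat -> R) (x : R) : R :=
  Series (fun n => chiB m a b (Nat.iter n (Tl m a b) x) / 2 ^ (S n)).

(* eta is only looked at on [0,1), the fundamental domain of T. *)
Definition in01 (x : R) : Prop := 0 <= x < 1.

Definition preimage_selector (eta : R -> R) : Prop :=
  forall x, in01 x -> in01 (eta x) /\ E2 (eta x) = x.

Definition circ_continuous_at (eta : R -> R) (x : R) : Prop :=
  forall eps, 0 < eps -> exists delta, 0 < delta /\
    forall y, in01 y -> cdist y x < delta -> cdist (eta y) (eta x) < eps.

Definition circ_left_limit (eta : R -> R) (x L : R) : Prop :=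
  forall eps, 0 < eps -> exists delta, 0 < delta /\
    forall h, 0 < h < delta -> cdist (eta (frac_part (x - h))) L < eps.

Definition circ_right_limit (eta : R -> R) (x L : R) : Prop :=
  forall eps, 0 < eps -> exists delta, 0 < delta /\
    forall h, 0 < h < delta -> cdist (eta (frac_part (x + h))) L < eps.

Definition jump_discontinuity (eta : R -> R) (x : R) : Prop :=
  exists Lm Lp, circ_left_limit eta x Lm /\ circ_right_limit eta x Lp /\
    cdist Lm Lp <> 0 /\ (cdist Lm (eta x) = 0 \/ cdist Lp (eta x) = 0).

Definition exactly_p_jump_discontinuities (eta : R -> R) (p : nat) : Prop :=
  exists D : list R, NoDup D /\ length D = p /\
    (forall x, In x D -> in01 x /\ jump_discontinuity eta x) /\
    (forall x, in01 x -> ~ circ_continuous_at eta x -> In x D).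

Definition in_closure_image (eta : R -> R) (y : R) : Prop :=
  forall eps, 0 < eps -> exists x, in01 x /\ cdist (eta x) y < eps.

(* F is a p-flower: F = closure(eta(T)) for a preimage selector eta
   with exactly p discontinuities (F given as a predicate on reals, read mod 1) *)
Definition is_flower (p : nat) (F : R -> Prop) : Prop :=
  exists eta, preimage_selector eta /\ exactly_p_jump_discontinuities eta p /\
    forall y, F y <-> in_closure_image eta y.

(* H x = 0.chi_B(x) chi_B(T x) chi_B(T^2 x) ... in binary, so H x = (chi_B x + H (T x)) / 2:
   H x is the E_2-preimage of H (T x) on the branch chi_B x.  On A and on B, T is a piecewise
   translation preserving order, so H is nondecreasing on [0,1).  The images
   T(B_0) < T(A_0) < T(B_1) < ... < T(A_(m-1)) tile [0,1), and chi_B x = 1 exactly when T x lies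
   in some T(B_j).  Monotonicity thus locates H (T x) between the H-values of the 2m-1 interior
   endpoints of this tiling, on the side that determines chi_B x.  These values are strictly
   increasing: equal values would force periodic orbits with a common period whose T-preimages
   have equal H but different chi_B.  The selector switching branch at these 2m-1 points (an odd
   number, so it closes up continuously at 0) has exactly 2m-1 jump discontinuities, and the
   closure of its image contains H([0,1)). *)

From Stdlib Require Import Reals List Lia Lra Classical ZArith.
From Coquelicot Require Import Coquelicot.
(* Defs is imported after Coquelicot, which has its own [ind]. *)
From Pilot Require Import Defs.
Open Scope R_scope.
(* Coquelicot loads ssreflect, which turns bullet checking off. *)
Set Bullet Behavior "Strict Subproofs".

Lemma psum_le (f : nat -> R) (n : nat) :
  (forall k, (k < n)%nat -> 0 < f k) ->
  forall i j, (i <= j)%nat -> (j <= n)%nat -> psum f i <= psum f j.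
Proof.
  intros Hpos i j Hij Hjn. induction j as [|j IH].
  - replace i with 0%nat by lia. lra.
  - destruct (Nat.eq_dec i (S j)) as [->|Hne]; [lra|].
    simpl. assert (0 < f j) by (apply Hpos; lia).
    assert (psum f i <= psum f j) by (apply IH; lia). lra.
Qed.

Lemma psum_ext (f g : nat -> R) (n : nat) :
  (forall k, (k < n)%nat -> f k = g k) -> psum f n = psum g n.
Proof.
  induction n; simpl; intros H; [lra|].
  rewrite IHn by (intros; apply H; lia). rewrite H by lia. lra.
Qed.

Lemma psum_zero (f : nat -> R) (n : nat) :
  (forall k, (k < n)%nat -> f k = 0) -> psum f n = 0.
Proof.
  induction n; simpl; intros H; [lra|].
  rewrite IHn by (intros; apply H; lia). rewrite H by lia. lra.
Qed.

Lemma psum_single (f : nat -> R) (n j : nat) : (j < n)%nat ->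
  (forall k, (k < n)%nat -> k <> j -> f k = 0) -> psum f n = f j.
Proof.
  induction n; intros Hj H; [lia|]. simpl.
  destruct (Nat.eq_dec j n) as [->|Hne].
  - rewrite psum_zero by (intros k Hk; apply H; lia). lra.
  - rewrite IHn, (H n) by (try lia; intros; apply H; lia). lra.
Qed.

Lemma psum_succ_l (f : nat -> R) (n : nat) :
  psum f (S n) = f 0%nat + psum (fun k => f (S k)) n.
Proof. induction n; simpl in *; [lra|]. rewrite IHn. lra. Qed.

Lemma psum_div_r (f : nat -> R) (c : R) (n : nat) :
  psum (fun k => f k / c) n = psum f n / c.
Proof. induction n; simpl; [unfold Rdiv; ring|]. rewrite IHn. unfold Rdiv. ring. Qed.

Lemma psum_cover (f : nat -> R) (n : nat) (x : R) :
  (forall k, (k < n)%nat -> 0 < f k) -> 0 <= x < psum f n ->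
  exists j, (j < n)%nat /\ psum f j <= x < psum f (S j).
Proof.
  induction n; intros Hpos Hx; simpl in Hx; [lra|].
  destruct (Rlt_dec x (psum f n)).
  - destruct IHn as [j [Hj Hxj]]; [intros; apply Hpos; lia|lra|].
    exists j. split; [lia|auto].
  - exists n. split; [lia|simpl; lra].
Qed.

Lemma ind_1 (p q x : R) : p <= x < q -> ind p q x = 1.
Proof. intros Hx. unfold ind. destruct (Rle_dec p x); [|lra]. destruct (Rlt_dec x q); lra. Qed.

Lemma ind_0 (p q x : R) : ~ (p <= x < q) -> ind p q x = 0.
Proof. intros Hx. unfold ind. destruct (Rle_dec p x), (Rlt_dec x q); auto. lra. Qed.

Lemma psum_ind_single (lo hi c : nat -> R) (n j : nat) (x : R) :
  (j < n)%nat -> lo j <= x < hi j ->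
  (forall i, (i < n)%nat -> lo i <= x < hi i -> i = j) ->
  psum (fun i => ind (lo i) (hi i) x * c i) n = c j.
Proof.
  intros Hj Hx Huniq. rewrite (psum_single _ n j Hj).
  - rewrite ind_1 by auto. ring.
  - intros i Hi Hij. rewrite ind_0; [ring|]. intros Hxi. apply Hij, Huniq; auto.
Qed.

Lemma psum_ind_zero (lo hi c : nat -> R) (n : nat) (x : R) :
  (forall i, (i < n)%nat -> ~ (lo i <= x < hi i)) ->
  psum (fun i => ind (lo i) (hi i) x * c i) n = 0.
Proof. intros Hout. apply psum_zero. intros i Hi. rewrite ind_0 by auto. ring. Qed.

Lemma frac_part_IZR_add (n : Z) (f : R) : 0 <= f < 1 -> frac_part (IZR n + f) = f.
Proof. intros Hf. symmetry. exact (proj2 (Int_part_frac_part_spec _ n f Hf eq_refl)). Qed.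

Lemma frac_part_id (f : R) : 0 <= f < 1 -> frac_part f = f.
Proof. intros Hf. rewrite <- (frac_part_IZR_add 0 f Hf) at 2. f_equal. simpl. lra. Qed.

Lemma cdist_refl (x : R) : cdist x x = 0.
Proof.
  unfold cdist. rewrite Rminus_diag, fp_R0. apply Rmin_left. lra.
Qed.

Lemma cdist_le_Rabs (x y : R) : cdist x y <= Rabs (x - y).
Proof.
  unfold cdist. pose proof (Rplus_Int_part_frac_part (x - y)) as Hd.
  pose proof (base_fp (x - y)) as Hf.
  set (n := Int_part (x - y)) in *. set (f := frac_part (x - y)) in *.
  destruct (Z_lt_le_dec n 0) as [Hn|Hn].
  - assert (IZR n <= -1) by (apply IZR_le; lia).
    rewrite Rabs_left by lra. eapply Rle_trans; [apply Rmin_r|lra].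
  - assert (0 <= IZR n) by (apply IZR_le; lia).
    rewrite Rabs_pos_eq by lra. eapply Rle_trans; [apply Rmin_l|lra].
Qed.

Lemma cdist_lt_Rabs (x y e : R) : Rabs (x - y) < e -> cdist x y < e.
Proof. intros H. eapply Rle_lt_trans; [apply cdist_le_Rabs|exact H]. Qed.

Lemma cdist_half (x y : R) : x - y = 1 / 2 \/ x - y = - (1 / 2) -> cdist x y = 1 / 2.
Proof.
  intros Hxy. unfold cdist.
  assert (Hf : frac_part (x - y) = 1 / 2).
  { destruct Hxy as [-> | ->]; [apply frac_part_id; lra|].
    replace (- (1 / 2)) with (IZR (-1) + 1 / 2) by (simpl; lra).
    apply frac_part_IZR_add. lra. }
  rewrite Hf. apply Rmin_left. lra.
Qed.

Lemma cdist_lt_in01 (x y d : R) : in01 x -> in01 y -> cdist x y < d ->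
  Rabs (x - y) < d \/ Rabs (x - y - 1) < d \/ Rabs (x - y + 1) < d.
Proof.
  unfold in01, cdist. intros Hx Hy Hc.
  destruct (Rle_dec 0 (x - y)).
  - rewrite frac_part_id in Hc by lra. revert Hc. unfold Rmin.
    destruct (Rle_dec (x - y) (1 - (x - y))); intros Hc.
    + left. rewrite Rabs_pos_eq; lra.
    + right; left. rewrite Rabs_left; lra.
  - replace (x - y) with (IZR (-1) + (x - y + 1)) in Hc by (simpl; lra).
    rewrite frac_part_IZR_add in Hc by lra. revert Hc. unfold Rmin.
    destruct (Rle_dec (x - y + 1) (1 - (x - y + 1))); intros Hc.
    + right; right. rewrite Rabs_pos_eq; lra.
    + left. rewrite Rabs_left; lra.
Qed.

Lemma exists_pos_le2 (x y : R) : 0 < x -> 0 < y -> exists d, 0 < d /\ d <= x /\ d <= y.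
Proof.
  intros Hx Hy. exists (Rmin x y).
  split; [apply Rmin_glb_lt; auto|split; [apply Rmin_l|apply Rmin_r]].
Qed.

Lemma INR_unbounded (c d : R) : 0 < d -> exists K : nat, c <= INR K * d.
Proof.
  intros Hd. destruct (Rle_dec c 0).
  - exists 0%nat. simpl. lra.
  - destruct (archimed (c / d)) as [Hup _].
    exists (Z.to_nat (up (c / d))).
    rewrite INR_IZR_INZ, Z2Nat.id.
    + replace c with (c / d * d) at 1 by (field; lra).
      apply Rmult_le_compat_r; lra.
    + apply le_IZR. assert (0 < c / d) by (apply Rdiv_lt_0_compat; lra). simpl. lra.
Qed.

Lemma bounded_no_drift (x : nat -> R) (lo hi d : R) : 0 < d ->
  (forall k, lo <= x k <= hi) -> (forall k, x k + d <= x (S k)) -> False.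
Proof.
  intros Hd Hb Hs.
  assert (Hk : forall k, x 0%nat + INR k * d <= x k).
  { induction k; [simpl; lra|]. rewrite S_INR. specialize (Hs k). lra. }
  destruct (INR_unbounded (hi - lo + 1) d Hd) as [K HK].
  specialize (Hk K). pose proof (Hb 0%nat). pose proof (Hb K). lra.
Qed.

Lemma is_lim_seq_bounds (u : nat -> R) (l lo hi : R) :
  is_lim_seq u l -> (forall n, lo <= u n <= hi) -> lo <= l <= hi.
Proof.
  intros Hu Hb. split.
  - apply (is_lim_seq_le (fun _ => lo) u lo l); [apply Hb|apply is_lim_seq_const|auto].
  - apply (is_lim_seq_le u (fun _ => hi) l hi); [apply Hb|auto|apply is_lim_seq_const].
Qed.

Lemma pigeonhole (K : nat) (g : nat -> nat) :
  (forall n, (n <= S K)%nat -> (g n <= K)%nat) ->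
  exists i j, (i < j <= S K)%nat /\ g i = g j.
Proof.
  revert g. induction K; intros g Hg.
  - exists 0%nat, 1%nat. pose proof (Hg 0%nat). pose proof (Hg 1%nat). split; lia.
  - destruct (classic (exists i, (i <= S K)%nat /\ g i = g (S (S K)))) as [[i [Hi Hgi]]|Hnew].
    + exists i, (S (S K)). split; [lia|auto].
    + (* close the gap left by the value g (S (S K)) and recurse *)
      set (v := g (S (S K))).
      set (g' := fun n => if Nat.ltb v (g n) then pred (g n) else g n).
      assert (Hv : forall n, (n <= S K)%nat -> g n <> v)
        by (intros n Hn E; apply Hnew; exists n; split; auto).
      destruct (IHK g') as [i [j [Hij Heq]]].
      { intros n Hn. unfold g'. pose proof (Hv n ltac:(lia)).
        pose proof (Hg n ltac:(lia)). pose proof (Hg (S (S K)) ltac:(lia)).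
        destruct (Nat.ltb_spec v (g n)); lia. }
      exists i, j. split; [lia|].
      pose proof (Hv i ltac:(lia)). pose proof (Hv j ltac:(lia)). unfold g' in Heq.
      destruct (Nat.ltb_spec v (g i)), (Nat.ltb_spec v (g j)); lia.
Qed.

Lemma close_pair_in01 (s : nat -> R) (L : R) : 0 < L -> (forall n, in01 (s n)) ->
  exists i j, (i < j)%nat /\ Rabs (s i - s j) < L.
Proof.
  intros HL Hs. unfold in01 in Hs.
  set (g := fun n => Z.to_nat (Int_part (s n / L))).
  assert (Hq : forall n, 0 <= s n / L < 1 / L).
  { intros n. specialize (Hs n). split; [apply Rdiv_le_0_compat; lra|].
    unfold Rdiv. apply Rmult_lt_compat_r; [apply Rinv_0_lt_compat|]; lra. }
  assert (Hnn : forall n, (0 <= Int_part (s n / L))%Z).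
  { intros n. pose proof (base_Int_part (s n / L)). pose proof (Hq n).
    assert (Hgt : -1 < IZR (Int_part (s n / L))) by lra. apply lt_IZR in Hgt. lia. }
  destruct (pigeonhole (Z.to_nat (up (1 / L))) g) as [i [j [Hij Hg]]].
  { intros n _. unfold g. pose proof (Hnn n).
    assert (Int_part (s n / L) < up (1 / L))%Z.
    { apply lt_IZR. pose proof (base_Int_part (s n / L)). pose proof (archimed (1 / L)).
      pose proof (Hq n). lra. }
    lia. }
  exists i, j. split; [lia|].
  unfold g in Hg. assert (Hij' : Int_part (s i / L) = Int_part (s j / L))
    by (pose proof (Hnn i); pose proof (Hnn j); lia).
  pose proof (base_Int_part (s i / L)) as Bi. pose proof (base_Int_part (s j / L)) as Bj.
  rewrite Hij' in Bi.
  assert (Hfr : Rabs (s i / L - s j / L) < 1) by (apply Rabs_def1; lra).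
  replace (s i - s j) with (L * (s i / L - s j / L)) by (field; lra).
  rewrite Rabs_mult, Rabs_pos_eq by lra.
  apply Rlt_le_trans with (L * 1); [apply Rmult_lt_compat_l|]; lra.
Qed.

Section Selector.

Variables (N : nat) (t : nat -> R).
Hypothesis t_incr : forall k, (S k < N)%nat -> t k < t (S k).
Hypothesis t_first_pos : 0 < t 0%nat.
Hypothesis t_last_lt1 : t (pred N) < 1.
Hypothesis N_odd : Nat.odd N = true.

Fixpoint count_le (n : nat) (u : R) : nat :=
  match n with
  | O => O
  | S k => (count_le k u + if Rle_dec (t k) u then 1 else 0)%nat
  end.

Definition even_bit (k : nat) : R := if Nat.even k then 1 else 0.
Definition branch (u : R) : R := even_bit (count_le N u).
Definition selector (u : R) : R := (branch u + u) / 2.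

(* [lower k, upper k), for k <= N, are the gaps between consecutive points t k; they tile [0,1). *)
Definition lower (k : nat) : R := match k with O => 0 | S i => t i end.
Definition upper (k : nat) : R := if Nat.eqb k N then 1 else t k.

Lemma N_pos : (0 < N)%nat.
Proof. destruct N; [discriminate|lia]. Qed.

Lemma t_lt i j : (i < j)%nat -> (j < N)%nat -> t i < t j.
Proof.
  intros Hij HjN. induction j; [lia|].
  destruct (Nat.eq_dec i j) as [->|Hne]; [apply t_incr; auto|].
  apply Rlt_trans with (t j); [apply IHj; lia|apply t_incr; auto].
Qed.

Lemma t_le i j : (i <= j)%nat -> (j < N)%nat -> t i <= t j.
Proof. intros Hij HjN. destruct (Nat.eq_dec i j) as [->|]; [lra|left; apply t_lt; lia]. Qed.

Lemma t_in01 i : (i < N)%nat -> 0 < t i < 1.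
Proof.
  intros Hi. split.
  - apply Rlt_le_trans with (t 0%nat); [auto|apply t_le; lia].
  - apply Rle_lt_trans with (t (pred N)); [apply t_le; lia|auto].
Qed.

Lemma t_inj i j : (i < N)%nat -> (j < N)%nat -> t i = t j -> i = j.
Proof.
  intros Hi Hj E. destruct (Nat.lt_trichotomy i j) as [H|[H|H]]; auto.
  - pose proof (t_lt i j H Hj). lra.
  - pose proof (t_lt j i H Hi). lra.
Qed.

Lemma upper_lt k : (k < N)%nat -> upper k = t k.
Proof. intros Hk. unfold upper. destruct (Nat.eqb_spec k N); [lia|auto]. Qed.

Lemma upper_N : upper N = 1.
Proof. unfold upper. rewrite Nat.eqb_refl. auto. Qed.

Lemma gap_bounds k : (k <= N)%nat -> 0 <= lower k < upper k /\ upper k <= 1.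
Proof.
  intros Hk. destruct (Nat.eq_dec k N) as [->|Hne].
  - rewrite upper_N. pose proof N_pos.
    replace (lower N) with (t (pred N)) by (destruct N; [lia|reflexivity]).
    pose proof (t_in01 (pred N) ltac:(lia)). lra.
  - rewrite upper_lt by lia. pose proof (t_in01 k ltac:(lia)).
    destruct k as [|i]; simpl; [lra|].
    pose proof (t_in01 i ltac:(lia)). pose proof (t_incr i ltac:(lia)). lra.
Qed.

Lemma count_le_gap n u : (n <= N)%nat -> 0 <= u ->
  (count_le n u <= n)%nat /\ lower (count_le n u) <= u /\
  (count_le n u = n \/ u < t (count_le n u)).
Proof.
  intros Hn Hu. induction n as [|n IH]; simpl; [split; [lia|split; [lra|auto]]|].
  destruct IH as [Hle [Hlo Hhi]]; [lia|].
  destruct (Rle_dec (t n) u) as [Htn|Htn].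
  - assert (Hc : count_le n u = n).
    { destruct Hhi as [|Hhi]; auto. exfalso.
      assert (t (count_le n u) <= t n) by (apply t_le; lia). lra. }
    rewrite Hc. replace (n + 1)%nat with (S n) by lia. simpl. auto.
  - rewrite Nat.add_0_r. split; [lia|split; auto].
    destruct Hhi as [->|]; right; [lra|auto].
Qed.

Lemma gap_unique k k' u : (k <= N)%nat -> (k' <= N)%nat ->
  lower k <= u < upper k -> lower k' <= u < upper k' -> k = k'.
Proof.
  assert (Hsep : forall i j, (i < j <= N)%nat -> upper i <= lower j).
  { intros i j Hij. rewrite upper_lt by lia. destruct j as [|j]; [lia|apply t_le; lia]. }
  intros Hk Hk' Hu Hu'. destruct (Nat.lt_trichotomy k k') as [H|[H|H]]; auto.
  - pose proof (Hsep k k' ltac:(lia)). lra.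
  - pose proof (Hsep k' k ltac:(lia)). lra.
Qed.

Lemma count_le_in_gap u : in01 u ->
  (count_le N u <= N)%nat /\ lower (count_le N u) <= u < upper (count_le N u).
Proof.
  intros [Hu0 Hu1]. destruct (count_le_gap N u (le_n N) Hu0) as [Hle [Hlo Hhi]].
  split; [auto|split; auto].
  destruct (Nat.eq_dec (count_le N u) N) as [->|Hne]; [rewrite upper_N; auto|].
  rewrite upper_lt by lia. destruct Hhi; [lia|auto].
Qed.

Lemma branch_on_gap k u : (k <= N)%nat -> lower k <= u < upper k -> branch u = even_bit k.
Proof.
  intros Hk Hu. pose proof (gap_bounds k Hk).
  destruct (count_le_in_gap u) as [Hc Hcu]; [unfold in01; lra|].
  unfold branch. f_equal. apply (gap_unique _ _ u Hc Hk Hcu Hu).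
Qed.

Lemma even_bit_succ k : even_bit (S k) = 1 - even_bit k.
Proof. unfold even_bit. rewrite Nat.even_succ, <- Nat.negb_even. destruct (Nat.even k); simpl; lra. Qed.

Lemma selector_preimage : preimage_selector selector.
Proof.
  intros x Hx. unfold in01 in *. unfold selector, E2, branch, even_bit.
  destruct (Nat.even (count_le N x)); split; try lra.
  - replace (2 * ((1 + x) / 2)) with (IZR 1 + x) by (simpl; field).
    apply frac_part_IZR_add; auto.
  - replace (2 * ((0 + x) / 2)) with x by field. apply frac_part_id; auto.
Qed.

(* N odd makes the branch just below 1 (even_bit N = 0) differ by exactly 1 from the branch
   at 0, so the selector closes up continuously across 0 = 1 on the circle. *)
Lemma selector_continuous_at_0 : circ_continuous_at selector 0.
Proof.
  intros eps Heps. pose proof (gap_bounds 0 ltac:(lia)) as G0. pose proof (gap_bounds N (le_n N)) as GN.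
  rewrite upper_N in GN.
  destruct (exists_pos_le2 eps (upper 0)) as [d1 [Hd1 [Hd1e Hd10]]]; [auto|lra|].
  destruct (exists_pos_le2 d1 (1 - lower N)) as [d [Hd [Hdd1 HdN]]]; [auto|lra|].
  exists d. split; [auto|]. intros y Hy Hc.
  assert (Hb0 : branch 0 = 1) by (rewrite (branch_on_gap 0 0) by (lia || (simpl; lra)); reflexivity).
  unfold selector. rewrite Hb0.
  destruct (cdist_lt_in01 y 0 d Hy ltac:(unfold in01; lra) Hc) as [C|[C|C]];
    apply Rabs_def2 in C; unfold in01 in Hy.
  - rewrite (branch_on_gap 0 y) by (lia || (simpl; lra)). change (even_bit 0) with 1.
    apply cdist_lt_Rabs, Rabs_def1; lra.
  - rewrite (branch_on_gap N y) by (auto || (rewrite upper_N; lra)).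
    replace (even_bit N) with 0 by (unfold even_bit; rewrite <- Nat.negb_odd, N_odd; auto).
    apply cdist_lt_Rabs, Rabs_def1; lra.
  - lra.
Qed.

Lemma selector_continuous_off u : in01 u -> 0 < u ->
  (forall i, (i < N)%nat -> t i <> u) -> circ_continuous_at selector u.
Proof.
  intros Hu Hu0 Hne eps Heps.
  destruct (count_le_in_gap u Hu) as [Hk Hgap].
  remember (count_le N u) as k eqn:Ek.
  pose proof (gap_bounds k Hk) as Gk.
  assert (Hlo : lower k < u).
  { destruct k as [|i]; simpl in *; [lra|].
    assert (t i <> u) by (apply Hne; lia). lra. }
  destruct (exists_pos_le2 (u - lower k) (upper k - u)) as [d1 [Hd1 [Hd1l Hd1u]]]; [lra|lra|].
  destruct (exists_pos_le2 eps d1) as [d [Hd [Hde Hdd1]]]; [auto|auto|].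
  exists d. split; [auto|]. intros y Hy Hc. unfold in01 in Hu, Hy.
  destruct (cdist_lt_in01 y u d Hy Hu Hc) as [C|[C|C]]; apply Rabs_def2 in C; [|lra|lra].
  unfold selector. rewrite (branch_on_gap k y), (branch_on_gap k u) by (auto; lra).
  apply cdist_lt_Rabs, Rabs_def1; lra.
Qed.

Lemma selector_jump k : (k < N)%nat -> jump_discontinuity selector (t k).
Proof.
  intros Hk. pose proof (gap_bounds k ltac:(lia)) as Gk.
  pose proof (gap_bounds (S k) Hk) as GSk. rewrite upper_lt in Gk by auto. simpl in GSk.
  exists ((even_bit k + t k) / 2), ((even_bit (S k) + t k) / 2).
  split; [|split; [|split]].
  - intros eps Heps.
    destruct (exists_pos_le2 eps (t k - lower k)) as [d [Hd [Hde Hdk]]]; [auto|lra|].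
    exists d. split; [auto|]. intros h Hh.
    rewrite frac_part_id by lra. unfold selector.
    rewrite (branch_on_gap k) by (try lia; rewrite upper_lt by auto; lra).
    apply cdist_lt_Rabs, Rabs_def1; lra.
  - intros eps Heps.
    destruct (exists_pos_le2 eps (upper (S k) - t k)) as [d [Hd [Hde Hdk]]]; [auto|lra|].
    exists d. split; [auto|]. intros h Hh.
    rewrite frac_part_id by lra. unfold selector.
    rewrite (branch_on_gap (S k)) by (simpl; lia || lra).
    apply cdist_lt_Rabs, Rabs_def1; lra.
  - rewrite cdist_half; [lra|]. rewrite even_bit_succ.
    unfold even_bit. destruct (Nat.even k); [left|right]; lra.
  - right. unfold selector. rewrite (branch_on_gap (S k)) by (simpl; lia || lra).
    apply cdist_refl.
Qed.

Lemma selector_jumps : exactly_p_jump_discontinuities selector N.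
Proof.
  exists (map t (seq 0 N)). split; [|split; [|split]].
  - apply NoDup_map_NoDup_ForallPairs; [|apply seq_NoDup].
    intros i j Hi Hj. apply in_seq in Hi, Hj. apply t_inj; lia.
  - rewrite length_map. apply length_seq.
  - intros x Hx. apply in_map_iff in Hx. destruct Hx as [i [<- Hi]]. apply in_seq in Hi.
    pose proof (t_in01 i ltac:(lia)). split; [unfold in01; lra|apply selector_jump; lia].
  - intros x Hx Hdisc. apply NNPP. intros Hnot. apply Hdisc.
    destruct (Req_dec x 0) as [->|Hx0]; [apply selector_continuous_at_0|].
    apply selector_continuous_off; auto; [destruct Hx; lra|].
    intros i Hi E. apply Hnot. apply in_map_iff. exists i. split; [auto|apply in_seq; lia].
Qed.

Lemma selector_closure_gap k u : (k <= N)%nat -> lower k <= u <= upper k ->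
  in_closure_image selector ((even_bit k + u) / 2).
Proof.
  intros Hk Hu eps Heps. pose proof (gap_bounds k Hk).
  destruct (Rlt_dec u (upper k)) as [Hlt|Hge].
  - exists u. split; [unfold in01; lra|].
    unfold selector. rewrite (branch_on_gap k u) by (auto; lra). rewrite cdist_refl. auto.
  - destruct (exists_pos_le2 eps (upper k - lower k)) as [h [Hh [Hhe Hhk]]]; [auto|lra|].
    exists (u - h / 2). split; [unfold in01; lra|].
    unfold selector. rewrite (branch_on_gap k) by (auto; lra).
    apply cdist_lt_Rabs, Rabs_def1; lra.
Qed.

End Selector.

Section DeckShuffler.

Variables (m : nat) (a b : nat -> R).
Hypothesis HL : length_vector m a b.
Local Notation T := (Tl m a b).
Local Notation H := (Hl m a b).
Local Notation chi := (chiB m a b).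
Local Notation it n x := (Nat.iter n (Tl m a b) x).
Local Notation PA := (psum a m).

Lemma m_pos : (1 <= m)%nat. Proof. apply HL. Qed.
Lemma a_pos i : (i < m)%nat -> 0 < a i. Proof. apply HL. Qed.
Lemma b_pos i : (i < m)%nat -> 0 < b i. Proof. apply HL. Qed.
Lemma total_length : PA + psum b m = 1. Proof. apply HL. Qed.

Lemma psum_a_le i j : (i <= j)%nat -> (j <= m)%nat -> psum a i <= psum a j.
Proof. apply psum_le, a_pos. Qed.
Lemma psum_b_le i j : (i <= j)%nat -> (j <= m)%nat -> psum b i <= psum b j.
Proof. apply psum_le, b_pos. Qed.

Definition inA (j : nat) (x : R) : Prop := (j < m)%nat /\ psum a j <= x < psum a (S j).
Definition inB (j : nat) (x : R) : Prop := (j < m)%nat /\ PA + psum b j <= x < PA + psum b (S j).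

Lemma inA_range j x : inA j x -> 0 <= x < PA.
Proof.
  intros [Hj Hx]. pose proof (psum_a_le 0 j ltac:(lia) ltac:(lia)).
  pose proof (psum_a_le (S j) m ltac:(lia) ltac:(lia)). simpl in *. lra.
Qed.

Lemma inB_range j x : inB j x -> PA <= x < 1.
Proof.
  intros [Hj Hx]. pose proof total_length. pose proof (psum_b_le 0 j ltac:(lia) ltac:(lia)).
  pose proof (psum_b_le (S j) m ltac:(lia) ltac:(lia)). simpl in *. lra.
Qed.

Lemma inA_unique i j x : inA i x -> inA j x -> i = j.
Proof.
  intros [Hi Hx] [Hj Hy]. destruct (Nat.lt_trichotomy i j) as [H|[H|H]]; auto.
  - pose proof (psum_a_le (S i) j ltac:(lia) ltac:(lia)). lra.
  - pose proof (psum_a_le (S j) i ltac:(lia) ltac:(lia)). lra.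
Qed.

Lemma inB_unique i j x : inB i x -> inB j x -> i = j.
Proof.
  intros [Hi Hx] [Hj Hy]. destruct (Nat.lt_trichotomy i j) as [H|[H|H]]; auto.
  - pose proof (psum_b_le (S i) j ltac:(lia) ltac:(lia)). lra.
  - pose proof (psum_b_le (S j) i ltac:(lia) ltac:(lia)). lra.
Qed.

Lemma inA_not_inB i j x : inA i x -> ~ inB j x.
Proof. intros HA HB. apply inA_range in HA. apply inB_range in HB. lra. Qed.

Lemma inA_or_inB x : in01 x -> (exists j, inA j x) \/ (exists j, inB j x).
Proof.
  intros Hx. unfold in01 in Hx. pose proof total_length. destruct (Rlt_dec x PA).
  - left. destruct (psum_cover a m x a_pos) as [j [Hj Hxj]]; [lra|]. exists j. split; auto.
  - right. destruct (psum_cover b m (x - PA) b_pos) as [j [Hj Hxj]]; [lra|].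
    exists j. split; [auto|lra].
Qed.

Lemma T_A j x : inA j x -> T x = x + psum b (S j).
Proof.
  intros HA. unfold Tl.
  rewrite (psum_ind_single (Aint_lo a) (Aint_hi a) (fun i => psum b (S i)) m j x);
    [|apply HA|apply HA|intros i Hi Hx; apply (inA_unique i j x); [split|]; auto].
  rewrite psum_ind_zero; [lra|].
  intros i Hi Hx. apply (inA_not_inB j i x HA). split; auto.
Qed.

Lemma T_B j x : inB j x -> T x = x - (PA - psum a j).
Proof.
  intros HB. unfold Tl.
  rewrite (psum_ind_single (Bint_lo m a b) (Bint_hi m a b) (fun i => PA - psum a i) m j x);
    [|apply HB|apply HB|intros i Hi Hx; apply (inB_unique i j x); [split|]; auto].
  rewrite psum_ind_zero; [lra|].
  intros i Hi Hx. apply (inA_not_inB i j x); [split|]; auto.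
Qed.

Lemma chiB_as_sum x :
  chi x = psum (fun i => ind (Bint_lo m a b i) (Bint_hi m a b i) x * 1) m.
Proof. apply psum_ext. intros. ring. Qed.

Lemma chiB_B j x : inB j x -> chi x = 1.
Proof.
  intros HB. rewrite chiB_as_sum.
  apply (psum_ind_single (Bint_lo m a b) (Bint_hi m a b) (fun _ => 1) m j x);
    [apply HB|apply HB|intros i Hi Hx; apply (inB_unique i j x); [split|]; auto].
Qed.

Lemma chiB_not_B x : (forall j, ~ inB j x) -> chi x = 0.
Proof.
  intros Hx. rewrite chiB_as_sum. apply psum_ind_zero.
  intros i Hi Hxi. apply (Hx i). split; auto.
Qed.

Lemma chiB_A j x : inA j x -> chi x = 0.
Proof. intros HA. apply chiB_not_B. intros i. apply (inA_not_inB j i x HA). Qed.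

Lemma chiB_bounds x : 0 <= chi x <= 1.
Proof.
  destruct (classic (exists j, inB j x)) as [[j Hj]|Hn].
  - rewrite (chiB_B j x Hj). lra.
  - rewrite chiB_not_B; [lra|]. intros j Hj. apply Hn. exists j; auto.
Qed.

Lemma T_A_range j x : inA j x -> psum a j + psum b (S j) <= T x < psum a (S j) + psum b (S j).
Proof. intros HA. rewrite (T_A j x HA). destruct HA. lra. Qed.

Lemma T_B_range j x : inB j x -> psum a j + psum b j <= T x < psum a j + psum b (S j).
Proof. intros HB. rewrite (T_B j x HB). destruct HB. lra. Qed.

Lemma T_in01 x : in01 x -> in01 (T x).
Proof.
  intros Hx. unfold in01. pose proof total_length.
  destruct (inA_or_inB x Hx) as [[j Hj]|[j Hj]].
  - pose proof (T_A_range j x Hj). destruct Hj as [Hj _].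
    pose proof (psum_a_le 0 j ltac:(lia) ltac:(lia)). pose proof (psum_b_le 0 (S j) ltac:(lia) ltac:(lia)).
    pose proof (psum_a_le (S j) m ltac:(lia) ltac:(lia)). pose proof (psum_b_le (S j) m ltac:(lia) ltac:(lia)).
    simpl in *. lra.
  - pose proof (T_B_range j x Hj). destruct Hj as [Hj _].
    pose proof (psum_a_le 0 j ltac:(lia) ltac:(lia)). pose proof (psum_b_le 0 j ltac:(lia) ltac:(lia)).
    pose proof (psum_a_le j m ltac:(lia) ltac:(lia)). pose proof (psum_b_le (S j) m ltac:(lia) ltac:(lia)).
    simpl in *. lra.
Qed.

Lemma iter_in01 n x : in01 x -> in01 (it n x).
Proof. induction n; intros Hx; simpl; auto. apply T_in01; auto. Qed.

(* On A (resp. B) alone, T is a piecewise translation with nondecreasing offsets,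
   so it does not shrink distances between ordered points. *)
Lemma T_A_expand i j x y : inA i x -> inA j y -> x <= y -> y - x <= T y - T x.
Proof.
  intros Hx Hy Hxy. rewrite (T_A i x Hx), (T_A j y Hy).
  assert (i <= j)%nat.
  { destruct (le_lt_dec i j); auto. destruct Hx as [? Hx], Hy as [? Hy].
    pose proof (psum_a_le (S j) i ltac:(lia) ltac:(lia)). lra. }
  pose proof (psum_b_le (S i) (S j) ltac:(lia) ltac:(destruct Hy; lia)). lra.
Qed.

Lemma T_B_expand i j x y : inB i x -> inB j y -> x <= y -> y - x <= T y - T x.
Proof.
  intros Hx Hy Hxy. rewrite (T_B i x Hx), (T_B j y Hy).
  assert (i <= j)%nat.
  { destruct (le_lt_dec i j); auto. destruct Hx as [? Hx], Hy as [? Hy].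
    pose proof (psum_b_le (S j) i ltac:(lia) ltac:(lia)). lra. }
  pose proof (psum_a_le i j ltac:(lia) ltac:(destruct Hy; lia)). lra.
Qed.

Lemma T_A_below_T_B i j x y : inA i x -> inB j y -> T x <> T y.
Proof.
  intros Hx Hy E. pose proof (T_A_range i x Hx). pose proof (T_B_range j y Hy).
  destruct Hx as [Hi _], Hy as [Hj _]. destruct (le_lt_dec j i).
  - pose proof (psum_b_le (S j) (S i) ltac:(lia) ltac:(lia)).
    pose proof (psum_a_le j i ltac:(lia) ltac:(lia)). lra.
  - pose proof (psum_b_le (S i) j ltac:(lia) ltac:(lia)).
    pose proof (psum_a_le (S i) j ltac:(lia) ltac:(lia)). lra.
Qed.

Lemma T_inj x y : in01 x -> in01 y -> T x = T y -> x = y.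
Proof.
  intros Hx Hy E.
  destruct (inA_or_inB x Hx) as [[i Hi]|[i Hi]], (inA_or_inB y Hy) as [[j Hj]|[j Hj]].
  - destruct (Rle_dec x y); [pose proof (T_A_expand i j x y Hi Hj)|pose proof (T_A_expand j i y x Hj Hi)]; lra.
  - destruct (T_A_below_T_B i j x y Hi Hj E).
  - destruct (T_A_below_T_B j i y x Hj Hi (eq_sym E)).
  - destruct (Rle_dec x y); [pose proof (T_B_expand i j x y Hi Hj)|pose proof (T_B_expand j i y x Hj Hi)]; lra.
Qed.

Lemma iter_inj n x y : in01 x -> in01 y -> it n x = it n y -> x = y.
Proof.
  induction n; intros Hx Hy E; [auto|]. rewrite !Nat.iter_succ in E.
  apply IHn; auto. apply T_inj; auto; apply iter_in01; auto.
Qed.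

Lemma orbit_hits_B x : in01 x -> exists n j, inB j (it n x).
Proof.
  intros Hx. apply NNPP. intros Hnever.
  assert (HA : forall n, exists j, inA j (it n x)).
  { intros n. destruct (inA_or_inB (it n x) (iter_in01 n x Hx)) as [HA|[j Hj]]; auto.
    exfalso. apply Hnever. exists n, j. auto. }
  apply (bounded_no_drift (fun n => it n x) 0 1 (b 0%nat)).
  - apply b_pos. pose proof m_pos. lia.
  - intros n. pose proof (iter_in01 n x Hx). unfold in01 in *. lra.
  - intros n. destruct (HA n) as [j Hj]. simpl. rewrite (T_A j _ Hj).
    pose proof (psum_b_le 1 (S j) ltac:(lia) ltac:(destruct Hj; lia)). simpl in *. lra.
Qed.

Lemma orbit_hits_A x : in01 x -> exists n j, inA j (it n x).
Proof.
  intros Hx. apply NNPP. intros Hnever.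
  assert (HB : forall n, exists j, inB j (it n x)).
  { intros n. destruct (inA_or_inB (it n x) (iter_in01 n x Hx)) as [[j Hj]|HB]; auto.
    exfalso. apply Hnever. exists n, j. auto. }
  apply (bounded_no_drift (fun n => - it n x) (-1) 0 (a (pred m))).
  - apply a_pos. pose proof m_pos. lia.
  - intros n. pose proof (iter_in01 n x Hx). unfold in01 in *. lra.
  - intros n. destruct (HB n) as [j Hj]. simpl. rewrite (T_B j _ Hj).
    pose proof (psum_a_le j (pred m) ltac:(destruct Hj; lia) ltac:(lia)).
    replace PA with (psum a (pred m) + a (pred m))
      by (pose proof m_pos; replace m with (S (pred m)) at 3 by lia; reflexivity).
    lra.
Qed.

Definition H_term (x : R) (n : nat) : R := chi (it n x) / 2 ^ S n.
Definition H_partial (N : nat) (x : R) : R := psum (H_term x) N.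

Lemma pow2_pos n : 0 < 2 ^ n.
Proof. apply pow_lt. lra. Qed.

Lemma H_term_bounds x n : 0 <= H_term x n <= / 2 ^ S n.
Proof.
  unfold H_term, Rdiv. pose proof (chiB_bounds (it n x)).
  pose proof (Rinv_0_lt_compat _ (pow2_pos (S n))). nra.
Qed.

Lemma H_partial_lim x : is_lim_seq (fun N => H_partial N x) (H x).
Proof.
  assert (Hsum : ex_series (H_term x)).
  { apply (@ex_series_le R_AbsRing R_CompleteNormedModule _ (fun n => (/ 2) ^ n)).
    - intros n. change (norm (H_term x n)) with (Rabs (H_term x n)).
      pose proof (H_term_bounds x n). rewrite Rabs_pos_eq, pow_inv by lra.
      apply Rle_trans with (/ 2 ^ S n); [lra|].
      apply Rinv_le_contravar; [apply pow2_pos|simpl; pose proof (pow2_pos n); lra].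
    - apply ex_series_geom. rewrite Rabs_pos_eq; lra. }
  apply is_lim_seq_incr_1. apply is_lim_seq_ext with (sum_n (H_term x)).
  - intros N. unfold H_partial. induction N; [rewrite sum_O; simpl; lra|].
    rewrite sum_Sn, IHN. reflexivity.
  - apply (Series_correct _ Hsum).
Qed.

Lemma H_partial_step N x : H_partial (S N) x = chi x / 2 + H_partial N (T x) / 2.
Proof.
  unfold H_partial. rewrite psum_succ_l, <- psum_div_r.
  unfold H_term at 1. simpl Nat.iter. f_equal; [f_equal; simpl; ring|].
  apply psum_ext. intros k _. unfold H_term. rewrite Nat.iter_succ_r. simpl. field.
  pose proof (pow2_pos k). lra.
Qed.

Lemma H_step x : H x = chi x / 2 + H (T x) / 2.
Proof.
  assert (L1 : is_lim_seq (fun N => H_partial (S N) x) (H x))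
    by apply (proj1 (is_lim_seq_incr_1 _ _)), H_partial_lim.
  assert (L2 : is_lim_seq (fun N => H_partial (S N) x) (chi x / 2 + H (T x) / 2)).
  { apply is_lim_seq_ext with (fun N => chi x / 2 + H_partial N (T x) * / 2).
    - intros N. rewrite H_partial_step. reflexivity.
    - apply is_lim_seq_plus'; [apply is_lim_seq_const|].
      exact (is_lim_seq_scal_r _ (/ 2) _ (H_partial_lim (T x))). }
  apply is_lim_seq_unique in L1, L2. rewrite L1 in L2. injection L2. auto.
Qed.

Lemma H_partial_bounds N x : 0 <= H_partial N x <= 1.
Proof.
  revert x. induction N; intros x; [unfold H_partial; simpl; lra|].
  rewrite H_partial_step. pose proof (chiB_bounds x). pose proof (IHN (T x)). lra.
Qed.

Lemma H_bounds x : 0 <= H x <= 1.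
Proof. apply (is_lim_seq_bounds _ _ _ _ (H_partial_lim x)). intros; apply H_partial_bounds. Qed.

Lemma H_A j x : inA j x -> H x = H (T x) / 2.
Proof. intros HA. rewrite H_step, (chiB_A j x HA). lra. Qed.

Lemma H_B j x : inB j x -> H x = 1 / 2 + H (T x) / 2.
Proof. intros HB. rewrite H_step, (chiB_B j x HB). lra. Qed.

Lemma H_partial_mono N x y : in01 x -> in01 y -> x <= y -> H_partial N x <= H_partial N y.
Proof.
  revert x y. induction N; intros x y Hx Hy Hxy; [unfold H_partial; simpl; lra|].
  rewrite !H_partial_step.
  pose proof (T_in01 x Hx). pose proof (T_in01 y Hy).
  destruct (inA_or_inB x Hx) as [[i Hi]|[i Hi]], (inA_or_inB y Hy) as [[j Hj]|[j Hj]].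
  - rewrite (chiB_A i x Hi), (chiB_A j y Hj).
    pose proof (IHN (T x) (T y) ltac:(auto) ltac:(auto) ltac:(pose proof (T_A_expand i j x y Hi Hj Hxy); lra)).
    lra.
  - rewrite (chiB_A i x Hi), (chiB_B j y Hj).
    pose proof (H_partial_bounds N (T x)). pose proof (H_partial_bounds N (T y)). lra.
  - exfalso. apply inB_range in Hi. apply inA_range in Hj. lra.
  - rewrite (chiB_B i x Hi), (chiB_B j y Hj).
    pose proof (IHN (T x) (T y) ltac:(auto) ltac:(auto) ltac:(pose proof (T_B_expand i j x y Hi Hj Hxy); lra)).
    lra.
Qed.

Lemma H_mono x y : in01 x -> in01 y -> x <= y -> H x <= H y.
Proof.
  intros Hx Hy Hxy.
  apply (is_lim_seq_le (fun N => H_partial N x) (fun N => H_partial N y) (H x) (H y));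
    [intros; apply H_partial_mono; auto|apply H_partial_lim|apply H_partial_lim].
Qed.

Lemma H_lt_1 x : in01 x -> H x < 1.
Proof.
  intros Hx. destruct (orbit_hits_A x Hx) as [n [j Hj]]. revert x Hx Hj.
  induction n; intros x Hx Hj.
  - rewrite (H_A j x Hj). pose proof (H_bounds (T x)). lra.
  - rewrite Nat.iter_succ_r in Hj. pose proof (IHn (T x) (T_in01 x Hx) Hj).
    rewrite H_step. pose proof (chiB_bounds x). lra.
Qed.

Lemma H_pos x : in01 x -> 0 < H x.
Proof.
  intros Hx. destruct (orbit_hits_B x Hx) as [n [j Hj]]. revert x Hx Hj.
  induction n; intros x Hx Hj.
  - rewrite (H_B j x Hj). pose proof (H_bounds (T x)). lra.
  - rewrite Nat.iter_succ_r in Hj. pose proof (IHn (T x) (T_in01 x Hx) Hj).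
    rewrite H_step. pose proof (chiB_bounds x). lra.
Qed.

(* The first binary digit of H x is chi x, and H x < 1 excludes the expansion 0.0111... *)
Lemma chi_from_H x : in01 x -> (chi x = 0 /\ H x < 1 / 2) \/ (chi x = 1 /\ 1 / 2 <= H x).
Proof.
  intros Hx. pose proof (H_lt_1 (T x) (T_in01 x Hx)). pose proof (H_bounds (T x)).
  destruct (inA_or_inB x Hx) as [[j Hj]|[j Hj]].
  - left. rewrite (chiB_A j x Hj), (H_A j x Hj). split; [auto|lra].
  - right. rewrite (chiB_B j x Hj), (H_B j x Hj). split; [auto|lra].
Qed.

Lemma H_eq_chi_eq x y : in01 x -> in01 y -> H x = H y -> chi x = chi y.
Proof.
  intros Hx Hy E.
  destruct (chi_from_H x Hx) as [[A1 A2]|[A1 A2]], (chi_from_H y Hy) as [[B1 B2]|[B1 B2]]; lra.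
Qed.

Lemma H_eq_T x y : in01 x -> in01 y -> H x = H y -> H (T x) = H (T y).
Proof.
  intros Hx Hy E. pose proof (H_eq_chi_eq x y Hx Hy E).
  rewrite (H_step x), (H_step y) in E. lra.
Qed.

Lemma H_eq_iter n x y : in01 x -> in01 y -> H x = H y -> H (it n x) = H (it n y).
Proof. induction n; intros Hx Hy E; simpl; auto. apply H_eq_T; try apply iter_in01; auto. Qed.

(* Points with the same itinerary lie in the same region A or B, where T expands. *)
Lemma H_eq_T_expand x y : in01 x -> in01 y -> H x = H y -> x <= y -> y - x <= T y - T x.
Proof.
  intros Hx Hy E Hxy. pose proof (H_eq_chi_eq x y Hx Hy E) as C.
  destruct (inA_or_inB x Hx) as [[i Hi]|[i Hi]], (inA_or_inB y Hy) as [[j Hj]|[j Hj]].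
  - apply (T_A_expand i j); auto.
  - rewrite (chiB_A i x Hi), (chiB_B j y Hj) in C. lra.
  - rewrite (chiB_B i x Hi), (chiB_A j y Hj) in C. lra.
  - apply (T_B_expand i j); auto.
Qed.

Lemma H_eq_iter_expand n x y : in01 x -> in01 y -> H x = H y -> x <= y ->
  y - x <= it n y - it n x.
Proof.
  revert x y. induction n; intros x y Hx Hy E Hxy; [simpl; lra|].
  rewrite !Nat.iter_succ_r.
  pose proof (H_eq_T_expand x y Hx Hy E Hxy).
  pose proof (IHn (T x) (T y) (T_in01 x Hx) (T_in01 y Hy) (H_eq_T x y Hx Hy E) ltac:(lra)).
  lra.
Qed.

(* An orbit returning to the level set of H must close up: otherwise the expansion
   above makes the return times drift monotonically out of [0,1). *)
Lemma H_return_fixed p z : in01 z -> H (it p z) = H z -> it p z = z.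
Proof.
  intros Hz E. set (g := fun k => it (k * p) z).
  assert (Hg01 : forall k, in01 (g k)) by (intros; apply iter_in01; auto).
  assert (Hgs : forall k, g (S k) = it p (g k)).
  { intros k. unfold g. replace (S k * p)%nat with (p + k * p)%nat by lia. apply Nat.iter_add. }
  assert (HgH : forall k, H (g k) = H z).
  { induction k; [reflexivity|]. rewrite Hgs, (H_eq_iter p (g k) z (Hg01 k) Hz IHk). auto. }
  assert (Hg1 : g 1%nat = it p z) by (unfold g; f_equal; lia).
  assert (Hstep : forall k, H (g k) = H (g (S k))) by (intros; rewrite !HgH; auto).
  destruct (Rtotal_order (it p z) z) as [Hlt|[He|Hgt]]; auto; exfalso.
  - apply (bounded_no_drift (fun k => - g k) (-1) 0 (z - it p z)); [lra| |].
    + intros k. pose proof (Hg01 k). unfold in01 in *. lra.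
    + induction k; simpl; [rewrite Hg1; unfold g; simpl; lra|].
      pose proof (H_eq_iter_expand p (g (S k)) (g k) (Hg01 _) (Hg01 _) (eq_sym (Hstep k)) ltac:(lra)).
      rewrite <- !Hgs in *. lra.
  - apply (bounded_no_drift g 0 1 (it p z - z)); [lra| |].
    + intros k. pose proof (Hg01 k). unfold in01 in *. lra.
    + induction k; [rewrite Hg1; unfold g; simpl; lra|].
      pose proof (H_eq_iter_expand p (g k) (g (S k)) (Hg01 _) (Hg01 _) (Hstep k) ltac:(lra)).
      rewrite <- !Hgs in *. lra.
Qed.

Lemma H_eq_return_periodic c i j : in01 c -> (i < j)%nat -> H (it i c) = H (it j c) ->
  it (j - i) c = c.
Proof.
  intros Hc Hij E.
  assert (Hsplit : forall x, it j x = it (j - i) (it i x))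
    by (intros; rewrite <- Nat.iter_add; f_equal; lia).
  assert (Hcomm : forall x, it (j - i) (it i x) = it i (it (j - i) x))
    by (intros; rewrite <- !Nat.iter_add; f_equal; lia).
  apply (iter_inj i); [apply iter_in01; auto|auto|].
  rewrite <- Hcomm. apply H_return_fixed; [apply iter_in01; auto|]. rewrite <- Hsplit. auto.
Qed.

Lemma H_sandwich u v w : in01 u -> in01 v -> in01 w -> u <= v <= w -> H u = H w -> H v = H u.
Proof.
  intros Hu Hv Hw Huvw E. pose proof (H_mono u v Hu Hv ltac:(lra)).
  pose proof (H_mono v w Hv Hw ltac:(lra)). lra.
Qed.

(* Two points with equal H stay at distance >= c' - c along their orbits; two iterates
   of c that are closer than that are then squeezed to the same H value. *)
Lemma H_eq_common_period c c' : in01 c -> in01 c' -> c < c' -> H c = H c' ->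
  exists p, (0 < p)%nat /\ it p c = c /\ it p c' = c'.
Proof.
  intros Hc Hc' Hlt E.
  assert (HE : forall n, H (it n c) = H (it n c')) by (intros; apply H_eq_iter; auto).
  assert (HD : forall n, c' - c <= it n c' - it n c)
    by (intros; apply H_eq_iter_expand; auto; lra).
  assert (I01 : forall n x, in01 x -> in01 (it n x)) by (intros; apply iter_in01; auto).
  destruct (close_pair_in01 (fun n => it n c) (c' - c)) as [i [j [Hij Hclose]]];
    [lra|intros; apply I01; auto|].
  apply Rabs_def2 in Hclose. pose proof (HD i) as HDi. pose proof (HD j) as HDj.
  assert (Hij_eq : H (it i c) = H (it j c)).
  { destruct (Rle_dec (it i c) (it j c)).
    - symmetry. apply (H_sandwich _ _ (it i c')); auto. lra.
    - apply (H_sandwich _ _ (it j c')); auto. lra. }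
  exists (j - i)%nat. split; [lia|split].
  - apply H_eq_return_periodic; auto.
  - apply H_eq_return_periodic; auto. rewrite <- !HE. auto.
Qed.

Lemma periodic_preimage p c x : in01 c -> in01 x -> (0 < p)%nat -> it p c = c -> T x = c ->
  x = it (pred p) c.
Proof.
  intros Hc Hx Hp Hper Hxc. apply T_inj; [auto|apply iter_in01; auto|].
  rewrite Hxc, <- Nat.iter_succ. replace (S (pred p)) with p by lia. auto.
Qed.

(* Equal H values would force a common period; the T-preimages x, x' would then have
   equal H, hence equal chi. *)
Lemma H_separates c c' x x' : in01 c -> in01 c' -> in01 x -> in01 x' -> c < c' ->
  T x = c -> T x' = c' -> chi x <> chi x' -> H c < H c'.
Proof.
  intros Hc Hc' Hx Hx' Hlt Ex Ex' Hchi.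
  destruct (Rle_lt_or_eq_dec _ _ (H_mono c c' Hc Hc' ltac:(lra))) as [|E]; auto. exfalso.
  destruct (H_eq_common_period c c' Hc Hc' Hlt E) as [p [Hp [Pc Pc']]].
  rewrite (periodic_preimage p c x), (periodic_preimage p c' x') in Hchi; auto.
  apply Hchi, H_eq_chi_eq; try apply iter_in01; auto. apply H_eq_iter; auto.
Qed.

(* T(B_0) < T(A_0) < T(B_1) < ... < T(A_(m-1)) tile [0,1); T(B_j) starts at TB_start j
   and T(A_j) at TA_start j. *)
Definition TA_start (j : nat) : R := psum a j + psum b (S j).
Definition TB_start (j : nat) : R := psum a j + psum b j.

Local Notation N := (2 * m - 1)%nat.

(* The H-values of the 2m-1 interior endpoints TA_start 0 < TB_start 1 < TA_start 1 < ... *)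
Definition threshold (k : nat) : R :=
  if Nat.even k then H (TA_start (Nat.div2 k)) else H (TB_start (S (Nat.div2 k))).

Lemma threshold_even j : threshold (2 * j) = H (TA_start j).
Proof. unfold threshold. rewrite Nat.even_even, Nat.div2_double. auto. Qed.

Lemma threshold_odd j : threshold (S (2 * j)) = H (TB_start (S j)).
Proof.
  unfold threshold. rewrite Nat.div2_succ_double.
  replace (S (2 * j)) with (2 * j + 1)%nat by lia. rewrite Nat.even_odd. auto.
Qed.

Lemma inA_start j : (j < m)%nat -> inA j (psum a j).
Proof. intros Hj. split; [auto|]. pose proof (a_pos j Hj). simpl. lra. Qed.

Lemma inB_start j : (j < m)%nat -> inB j (PA + psum b j).
Proof. intros Hj. split; [auto|]. pose proof (b_pos j Hj). simpl. lra. Qed.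

Lemma inA_in01 j x : inA j x -> in01 x.
Proof.
  intros HA. pose proof (inA_range j x HA). pose proof total_length.
  pose proof (psum_b_le 0 m ltac:(lia) (le_n m)). unfold in01. simpl in *. lra.
Qed.

Lemma inB_in01 j x : inB j x -> in01 x.
Proof.
  intros HB. pose proof (inB_range j x HB). pose proof (psum_a_le 0 m ltac:(lia) (le_n m)).
  unfold in01. simpl in *. lra.
Qed.

Lemma T_A_start j : (j < m)%nat -> T (psum a j) = TA_start j.
Proof. intros Hj. rewrite (T_A j _ (inA_start j Hj)). unfold TA_start. lra. Qed.

Lemma T_B_start j : (j < m)%nat -> T (PA + psum b j) = TB_start j.
Proof. intros Hj. rewrite (T_B j _ (inB_start j Hj)). unfold TB_start. lra. Qed.

Lemma TA_start_in01 j : (j < m)%nat -> in01 (TA_start j).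
Proof. intros Hj. rewrite <- T_A_start by auto. apply T_in01, (inA_in01 j), inA_start, Hj. Qed.

Lemma TB_start_in01 j : (j < m)%nat -> in01 (TB_start j).
Proof. intros Hj. rewrite <- T_B_start by auto. apply T_in01, (inB_in01 j), inB_start, Hj. Qed.

Lemma H_TA_lt_TB j : (S j < m)%nat -> H (TA_start j) < H (TB_start (S j)).
Proof.
  intros Hj. pose proof (inA_start j ltac:(lia)) as HA. pose proof (inB_start (S j) Hj) as HB.
  apply (H_separates _ _ _ _ (TA_start_in01 j ltac:(lia)) (TB_start_in01 (S j) Hj)
           (inA_in01 j _ HA) (inB_in01 (S j) _ HB)).
  - unfold TA_start, TB_start. simpl. pose proof (a_pos j ltac:(lia)). lra.
  - apply T_A_start. lia.
  - apply T_B_start. auto.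
  - rewrite (chiB_A j _ HA), (chiB_B (S j) _ HB). lra.
Qed.

Lemma H_TB_lt_TA j : (0 < j < m)%nat -> H (TB_start j) < H (TA_start j).
Proof.
  intros Hj. pose proof (inA_start j ltac:(lia)) as HA. pose proof (inB_start j ltac:(lia)) as HB.
  apply (H_separates _ _ _ _ (TB_start_in01 j ltac:(lia)) (TA_start_in01 j ltac:(lia))
           (inB_in01 j _ HB) (inA_in01 j _ HA)).
  - unfold TA_start, TB_start. simpl. pose proof (b_pos j ltac:(lia)). lra.
  - apply T_B_start. lia.
  - apply T_A_start. lia.
  - rewrite (chiB_A j _ HA), (chiB_B j _ HB). lra.
Qed.

Lemma threshold_incr k : (S k < N)%nat -> threshold k < threshold (S k).
Proof.
  intros Hk. destruct (Nat.Even_or_Odd k) as [[j ->]|[j ->]].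
  - rewrite threshold_even, threshold_odd. apply H_TA_lt_TB. lia.
  - replace (S (2 * j + 1)) with (2 * S j)%nat by lia.
    replace (2 * j + 1)%nat with (S (2 * j)) by lia.
    rewrite threshold_even, threshold_odd. apply H_TB_lt_TA. lia.
Qed.

Lemma threshold_first_pos : 0 < threshold 0.
Proof.
  change 0%nat with (2 * 0)%nat. rewrite threshold_even.
  apply H_pos, TA_start_in01. pose proof m_pos. lia.
Qed.

Lemma threshold_last_lt_1 : threshold (pred N) < 1.
Proof.
  pose proof m_pos. replace (pred N) with (2 * (m - 1))%nat by lia.
  rewrite threshold_even. apply H_lt_1, TA_start_in01. lia.
Qed.

Lemma threshold_count_odd : Nat.odd N = true.
Proof.
  pose proof m_pos. replace N with (2 * (m - 1) + 1)%nat by lia. apply Nat.odd_odd.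
Qed.

Lemma H_in_closure_A j x : inA j x -> in_closure_image (selector N threshold) (H x).
Proof.
  intros HA. pose proof (T_A_range j x HA) as Hr. pose proof (inA_in01 j x HA) as Hx.
  destruct HA as [Hj Hjx].
  rewrite (H_A j x (conj Hj Hjx)).
  replace (H (T x) / 2) with ((even_bit (S (2 * j)) + H (T x)) / 2)
    by (unfold even_bit; replace (S (2 * j)) with (2 * j + 1)%nat by lia; rewrite Nat.even_odd; lra).
  apply (selector_closure_gap _ _ threshold_incr threshold_first_pos threshold_last_lt_1
           threshold_count_odd); [lia|split].
  - change (lower threshold (S (2 * j))) with (threshold (2 * j)). rewrite threshold_even.
    apply H_mono; [apply TA_start_in01; auto|apply T_in01; auto|unfold TA_start; lra].
  - unfold upper. destruct (Nat.eqb_spec (S (2 * j)) N) as [_|Hne].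
    + apply H_bounds.
    + rewrite threshold_odd.
      apply H_mono; [apply T_in01; auto|apply TB_start_in01; lia|unfold TB_start; lra].
Qed.

Lemma H_in_closure_B j x : inB j x -> in_closure_image (selector N threshold) (H x).
Proof.
  intros HB. pose proof (T_B_range j x HB) as Hr. pose proof (inB_in01 j x HB) as Hx.
  destruct HB as [Hj Hjx].
  rewrite (H_B j x (conj Hj Hjx)).
  replace (1 / 2 + H (T x) / 2) with ((even_bit (2 * j) + H (T x)) / 2)
    by (unfold even_bit; rewrite Nat.even_even; lra).
  apply (selector_closure_gap _ _ threshold_incr threshold_first_pos threshold_last_lt_1
           threshold_count_odd); [lia|split].
  - destruct j as [|j]; [apply H_bounds|].
    replace (2 * S j)%nat with (S (S (2 * j))) by lia.
    change (lower threshold (S (S (2 * j)))) with (threshold (S (2 * j))). rewrite threshold_odd.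
    apply H_mono; [apply TB_start_in01; auto|apply T_in01; auto|unfold TB_start; lra].
  - unfold upper. destruct (Nat.eqb_spec (2 * j) N) as [E|_]; [lia|].
    rewrite threshold_even.
    apply H_mono; [apply T_in01; auto|apply TA_start_in01; auto|unfold TA_start; lra].
Qed.

Lemma H_in_closure x : in01 x -> in_closure_image (selector N threshold) (H x).
Proof.
  intros Hx. destruct (inA_or_inB x Hx) as [[j Hj]|[j Hj]];
    [apply (H_in_closure_A j)|apply (H_in_closure_B j)]; auto.
Qed.

End DeckShuffler.

Theorem theorem4 (m : nat) (a b : nat -> R) :
  length_vector m a b ->
  exists F : R -> Prop, is_flower (2 * m - 1)%nat F /\
    forall x, in01 x -> F (Hl m a b x).
Proof.
  intros HL. set (eta := selector (2 * m - 1) (threshold m a b)).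
  exists (in_closure_image eta). split.
  - exists eta. split; [|split].
    + apply selector_preimage.
    + apply selector_jumps.
      * apply threshold_incr, HL.
      * apply threshold_first_pos, HL.
      * apply threshold_last_lt_1, HL.
      * exact (threshold_count_odd m a b HL).
    + intros y. reflexivity.
  - apply H_in_closure. exact HL.
Qed.
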